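(* Let $f\colon X\to X$ be a homeomorphism of a metric space $X$. Every isolated set $\Lambda$ of $f$ admits a (discrete) catenary function.
   Context: An $f$-invariant set $\Lambda$ is isolated if there is a compact neighborhood $N$ of $\Lambda$ (an isolating neighborhood) such that $f^n(x)\in N$ for all $n\in\mathbb{Z}$ implies $x\in\Lambda$. For $\mathcal L\colon N\to\mathbb{R}$, set $\ddot{\mathcal L}(x)=\mathcal L(f(x))-2\mathcal L(x)+\mathcal L(f^{-1}(x))$ whenever $f(x),x,f^{-1}(x)\in N$. A catenary function for $\Lambda$ is a continuous $\mathcal L\colon N\to\mathbb{R}$, with $N$ an isolating neighborhood of $\Lambda$, such that $\mathcal L(\Lambda)=0$, $\mathcal L>0$ on $N\setminus\Lambda$, and $\ddot{\mathcal L}(x)=\mathcal L(x)$ wherever $\ddot{\mathcal L}(x)$ is defined. *)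

From Stdlib Require Import Reals ZArith List.
Open Scope R_scope.

Record MetricSpace := {
  carrier :> Type;
  dist : carrier -> carrier -> R;
  dist_refl : forall x y, dist x y = 0 <-> x = y;
  dist_sym : forall x y, dist x y = dist y x;
  dist_tri : forall x y z, dist x z <= dist x y + dist y z
}.

Section Topology.
Variable X : MetricSpace.

Definition is_open (U : X -> Prop) : Prop :=
  forall x, U x -> exists eps, 0 < eps /\ forall y, dist X x y < eps -> U y.

Definition is_compact (K : X -> Prop) : Prop :=
  forall (I : Type) (U : I -> X -> Prop),
    (forall i, is_open (U i)) ->
    (forall x, K x -> exists i, U i x) ->
    exists l : list I, forall x, K x -> exists i, In i l /\ U i x.

Definition is_neighborhood (N A : X -> Prop) : Prop :=
  exists U, is_open U /\ (forall x, A x -> U x) /\ (forall x, U x -> N x).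

Definition continuous (f : X -> X) : Prop :=
  forall x eps, 0 < eps -> exists delta, 0 < delta /\
    forall y, dist X x y < delta -> dist X (f x) (f y) < eps.

Definition continuous_on (N : X -> Prop) (L : X -> R) : Prop :=
  forall x, N x -> forall eps, 0 < eps -> exists delta, 0 < delta /\
    forall y, N y -> dist X x y < delta -> Rabs (L y - L x) < eps.

Definition homeomorphism (f g : X -> X) : Prop :=
  continuous f /\ continuous g /\
  (forall x, g (f x) = x) /\ (forall x, f (g x) = x).

Definition iterZ (f g : X -> X) (n : Z) (x : X) : X :=
  match n with
  | Z0 => x
  | Zpos p => Nat.iter (Pos.to_nat p) f x
  | Zneg p => Nat.iter (Pos.to_nat p) g x
  end.

Definition invariant (f : X -> X) (Lam : X -> Prop) : Prop :=
  (forall x, Lam x -> Lam (f x)) /\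
  (forall y, Lam y -> exists x, Lam x /\ f x = y).

Definition isolating_neighborhood (f g : X -> X) (Lam N : X -> Prop) : Prop :=
  is_compact N /\ is_neighborhood N Lam /\
  (forall x, (forall n : Z, N (iterZ f g n x)) -> Lam x).

Definition isolated (f g : X -> X) (Lam : X -> Prop) : Prop :=
  invariant f Lam /\ exists N, isolating_neighborhood f g Lam N.

(* L is a catenary function for Lam on N (only values of L on N matter) *)
Definition catenary_function (f g : X -> X) (Lam N : X -> Prop) (L : X -> R)
  : Prop :=
  isolating_neighborhood f g Lam N /\
  continuous_on N L /\
  (forall x, Lam x -> L x = 0) /\
  (forall x, N x -> ~ Lam x -> 0 < L x) /\
  (forall x, N (f x) -> N x -> N (g x) ->
     L (f x) - 2 * L x + L (g x) = L x).

End Topology.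

From Stdlib Require Import Reals ZArith List Lra Psatz Classical.
From Coquelicot Require Import Coquelicot.
Open Scope R_scope.

(* Let [u] be the distance to the isolating neighbourhood [N], truncated at 1,
   and put [L x = sum_(n in Z) mu^|n| u (f^n x)] with [0 < mu < 1].  For [x] in [N]
   with [f x] and [f^-1 x] in [N] the term [n = 0] and the neighbouring terms
   vanish, and shifting the series by one step multiplies its two halves by
   [1/mu] and [mu]; choosing [mu + 1/mu = 3] turns this into the catenary
   equation.  [L] vanishes on the invariant set [Lam] (inside [N]), and a point of
   [N] outside [Lam] has an orbit leaving [N], hence a positive term.  [L] is
   continuous as a uniform limit of its partial sums. *)

Section MetricFacts.
Variable X : MetricSpace.

Lemma dist_xx (x : X) : dist X x x = 0.
Proof. exact (proj2 (dist_refl X x x) eq_refl). Qed.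

Lemma dist_nonneg (x y : X) : 0 <= dist X x y.
Proof.
  pose proof (dist_tri X x y x) as H.
  rewrite (dist_sym X y x), dist_xx in H. lra.
Qed.

Lemma dist_pos (x y : X) : x <> y -> 0 < dist X x y.
Proof.
  intro Hxy. destruct (dist_nonneg x y) as [H|H]; [exact H|].
  exfalso. apply Hxy, (dist_refl X). auto.
Qed.

Lemma open_ball (c : X) (r : R) : is_open X (fun w => dist X w c < r).
Proof.
  intros x Hx. exists (r - dist X x c). split; [lra|]. intros y Hy.
  pose proof (dist_tri X y x c). rewrite (dist_sym X y x) in *. lra.
Qed.

Lemma continuous_iter (h : X -> X) : continuous X h -> forall n, continuous X (Nat.iter n h).
Proof.
  intros Hh n. induction n as [|n IH]; intros x eps Heps; simpl.
  - exists eps. auto.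
  - destruct (Hh (Nat.iter n h x) eps Heps) as [d1 [Hd1 H1]].
    destruct (IH x d1 Hd1) as [d2 [Hd2 H2]].
    exists d2. auto.
Qed.

Definition rcontinuous (F : X -> R) : Prop :=
  forall x eps, 0 < eps -> exists delta, 0 < delta /\
    forall y, dist X x y < delta -> Rabs (F y - F x) < eps.

Lemma rcontinuous_continuous_on (N : X -> Prop) (F : X -> R) :
  rcontinuous F -> continuous_on X N F.
Proof.
  intros HF x _ eps Heps. destruct (HF x eps Heps) as [d [Hd H]]. exists d. auto.
Qed.

Lemma rcontinuous_lipschitz (F : X -> R) :
  (forall x y, Rabs (F y - F x) <= dist X x y) -> rcontinuous F.
Proof.
  intros HF x eps Heps. exists eps. split; [exact Heps|].
  intros y Hy. specialize (HF x y). lra.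
Qed.

Lemma rcontinuous_comp (F : X -> R) (h : X -> X) :
  rcontinuous F -> continuous X h -> rcontinuous (fun x => F (h x)).
Proof.
  intros HF Hh x eps Heps.
  destruct (HF (h x) eps Heps) as [d1 [Hd1 H1]].
  destruct (Hh x d1 Hd1) as [d2 [Hd2 H2]].
  exists d2. auto.
Qed.

Lemma rcontinuous_scal (c : R) (F : X -> R) :
  rcontinuous F -> rcontinuous (fun x => c * F x).
Proof.
  intros HF x eps Heps.
  assert (Hc : 0 < Rabs c + 1) by (pose proof (Rabs_pos c); lra).
  destruct (HF x (eps / (Rabs c + 1))) as [d [Hd H]].
  { apply Rdiv_lt_0_compat; assumption. }
  exists d. split; [exact Hd|]. intros y Hy.
  rewrite <- Rmult_minus_distr_l, Rabs_mult.
  specialize (H y Hy).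
  assert (Heq : (Rabs c + 1) * (eps / (Rabs c + 1)) = eps) by (field; lra).
  pose proof (Rabs_pos c). pose proof (Rabs_pos (F y - F x)). nra.
Qed.

Lemma rcontinuous_plus (F G : X -> R) :
  rcontinuous F -> rcontinuous G -> rcontinuous (fun x => F x + G x).
Proof.
  intros HF HG x eps Heps.
  destruct (HF x (eps / 2)) as [d1 [Hd1 H1]]; [lra|].
  destruct (HG x (eps / 2)) as [d2 [Hd2 H2]]; [lra|].
  exists (Rmin d1 d2). split; [apply Rmin_pos; assumption|]. intros y Hy.
  specialize (H1 y (Rlt_le_trans _ _ _ Hy (Rmin_l d1 d2))).
  specialize (H2 y (Rlt_le_trans _ _ _ Hy (Rmin_r d1 d2))).
  replace (F y + G y - (F x + G x)) with ((F y - F x) + (G y - G x)) by ring.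
  pose proof (Rabs_triang (F y - F x) (G y - G x)). lra.
Qed.

Lemma rcontinuous_opp (F : X -> R) : rcontinuous F -> rcontinuous (fun x => - F x).
Proof.
  intros HF x eps Heps. destruct (HF x eps Heps) as [d [Hd H]].
  exists d. split; [exact Hd|]. intros y Hy.
  replace (- F y - - F x) with (- (F y - F x)) by ring. rewrite Rabs_Ropp. auto.
Qed.

Lemma rcontinuous_sum (F : nat -> X -> R) :
  (forall n, rcontinuous (F n)) -> forall M, rcontinuous (fun x => sum_f_R0 (fun n => F n x) M).
Proof.
  intros HF M. induction M as [|M IH]; simpl; [apply HF|].
  apply rcontinuous_plus; auto.
Qed.

Lemma rcontinuous_uniform_limit (F : X -> R) :
  (forall eps, 0 < eps -> exists G, rcontinuous G /\ forall x, Rabs (F x - G x) <= eps) ->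
  rcontinuous F.
Proof.
  intros HF x eps Heps.
  destruct (HF (eps / 3)) as [G [HG Happrox]]; [lra|].
  destruct (HG x (eps / 3)) as [d [Hd H]]; [lra|].
  exists d. split; [exact Hd|]. intros y Hy.
  specialize (H y Hy). pose proof (Happrox x). pose proof (Happrox y).
  apply Rabs_def2 in H. apply Rabs_le_between in H0, H1.
  apply Rabs_def1; lra.
Qed.

End MetricFacts.

Section DistanceToSet.
Variables (X : MetricSpace) (N : X -> Prop).

(* [real] sends the infimum [+oo] of the empty set to [0]. *)
Definition dist_set (y : X) : R :=
  real (Glb_Rbar (fun r => exists z, N z /\ r = dist X y z)).

Lemma dist_set_spec (y : X) : (exists z, N z) ->
  (forall z, N z -> dist_set y <= dist X y z) /\
  (forall b, (forall z, N z -> b <= dist X y z) -> b <= dist_set y).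
Proof.
  intros [z0 Hz0]. unfold dist_set.
  destruct (Glb_Rbar_correct (fun r => exists z, N z /\ r = dist X y z)) as [Hlb Hglb].
  destruct (Glb_Rbar _) as [r| |] eqn:E; simpl.
  - split.
    + intros z Hz. apply (Hlb (dist X y z)). eauto.
    + intros b Hb. apply (Hglb (Finite b)). intros ? [z [Hz ->]]. simpl. auto.
  - exfalso. exact (Hlb (dist X y z0) (ex_intro _ z0 (conj Hz0 eq_refl))).
  - exfalso. apply (Hglb (Finite 0)).
    intros ? [z [_ ->]]. apply dist_nonneg.
Qed.

Lemma dist_set_empty (y : X) : ~ (exists z, N z) -> dist_set y = 0.
Proof.
  intro Hempty. unfold dist_set.
  destruct (Glb_Rbar_correct (fun r => exists z, N z /\ r = dist X y z)) as [_ Hglb].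
  destruct (Glb_Rbar _) as [r| |]; simpl; [|reflexivity|reflexivity].
  exfalso. apply (Hglb p_infty). intros ? [z [Hz _]]. exfalso. eauto.
Qed.

Lemma dist_set_nonneg (y : X) : 0 <= dist_set y.
Proof.
  destruct (classic (exists z, N z)) as [Hne|Hempty].
  - apply (proj2 (dist_set_spec y Hne)). intros z _. apply dist_nonneg.
  - rewrite dist_set_empty by exact Hempty. lra.
Qed.

Lemma dist_set_eq0 (y : X) : N y -> dist_set y = 0.
Proof.
  intro Hy. pose proof (proj1 (dist_set_spec y (ex_intro _ y Hy)) y Hy) as H.
  rewrite dist_xx in H. pose proof (dist_set_nonneg y). lra.
Qed.

Lemma dist_set_lipschitz (y y' : X) : Rabs (dist_set y' - dist_set y) <= dist X y y'.
Proof.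
  destruct (classic (exists z, N z)) as [Hne|Hempty].
  2:{ rewrite !dist_set_empty by exact Hempty. rewrite Rminus_0_r, Rabs_R0. apply dist_nonneg. }
  assert (Hshift : forall a b, dist_set b <= dist_set a + dist X a b).
  { intros a b.
    enough (dist_set b - dist X a b <= dist_set a) by lra.
    apply (proj2 (dist_set_spec a Hne)). intros z Hz.
    pose proof (proj1 (dist_set_spec b Hne) z Hz).
    pose proof (dist_tri X b a z). rewrite (dist_sym X b a) in *. lra. }
  pose proof (Hshift y y'). pose proof (Hshift y' y).
  rewrite (dist_sym X y' y) in *. apply Rabs_le. lra.
Qed.

Lemma list_min_pos (A : Type) (w : A -> R) (l : list A) :
  (forall a, In a l -> 0 < w a) -> exists r, 0 < r /\ forall a, In a l -> r <= w a.
Proof.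
  induction l as [|a l IH]; intro Hpos.
  - exists 1. split; [lra|]. intros ? [].
  - destruct IH as [r [Hr H]]; [intros; apply Hpos; right; assumption|].
    exists (Rmin r (w a)). split; [apply Rmin_pos; auto using in_eq|].
    intros b [<-|Hb]; [apply Rmin_r|].
    eapply Rle_trans; [apply Rmin_l|auto].
Qed.

(* Cover [N] by the balls around [z] of radius [dist y z / 2]; the minimal radius
   of a finite subcover bounds [dist y _] from below on [N]. *)
Lemma dist_set_pos (y : X) :
  is_compact X N -> (exists z, N z) -> ~ N y -> 0 < dist_set y.
Proof.
  intros Hcomp Hne Hy.
  set (rad := fun z : {z : X | N z} => dist X y (proj1_sig z) / 2).
  assert (Hrad : forall z, 0 < rad z).
  { intros [z Hz]. unfold rad; simpl.
    assert (0 < dist X y z) by (apply dist_pos; intros ->; contradiction). lra. }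
  destruct (Hcomp {z : X | N z} (fun z w => dist X w (proj1_sig z) < rad z)) as [l Hl].
  - intros z. apply open_ball.
  - intros x Hx. exists (exist _ x Hx). simpl. rewrite dist_xx. apply Hrad.
  - destruct (list_min_pos _ rad l (fun z _ => Hrad z)) as [r [Hr Hmin]].
    apply Rlt_le_trans with r; [exact Hr|].
    apply (proj2 (dist_set_spec y Hne)). intros z Hz.
    destruct (Hl z Hz) as [i [Hi Hzi]]. specialize (Hmin i Hi).
    pose proof (dist_tri X y z (proj1_sig i)). unfold rad in *. lra.
Qed.

Definition trunc_dist (y : X) : R := Rmin 1 (dist_set y).

Lemma trunc_dist_bounds (y : X) : 0 <= trunc_dist y <= 1.
Proof.
  split; [apply Rmin_glb; [lra|apply dist_set_nonneg]|apply Rmin_l].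
Qed.

Lemma trunc_dist_eq0 (y : X) : N y -> trunc_dist y = 0.
Proof.
  intro Hy. unfold trunc_dist. rewrite dist_set_eq0 by exact Hy.
  apply Rmin_right. lra.
Qed.

Lemma trunc_dist_pos (y : X) :
  is_compact X N -> (exists z, N z) -> ~ N y -> 0 < trunc_dist y.
Proof. intros. apply Rmin_pos; [lra|]. apply dist_set_pos; assumption. Qed.

Lemma rcontinuous_trunc_dist : rcontinuous X trunc_dist.
Proof.
  apply rcontinuous_lipschitz. intros y y'.
  pose proof (dist_set_lipschitz y y') as H. apply Rabs_le_between in H.
  unfold trunc_dist, Rmin. apply Rabs_le. repeat destruct Rle_dec; lra.
Qed.

End DistanceToSet.

Lemma Series_zero (b : nat -> R) : (forall n, b n = 0) -> Series b = 0.
Proof.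
  intro Hb. rewrite (Series_ext _ (fun n => 0 * 0)) by (intro; rewrite Hb; ring).
  rewrite Series_scal_l. ring.
Qed.

Lemma Series_nonneg (b : nat -> R) : (forall n, 0 <= b n) -> ex_series b -> 0 <= Series b.
Proof.
  intros Hb Hex. rewrite <- (Series_zero (fun _ => 0)) by reflexivity.
  apply Series_le; [intro; split; [lra|auto]|exact Hex].
Qed.

Lemma Series_ge_term (k : nat) (b : nat -> R) :
  (forall n, 0 <= b n) -> ex_series b -> b k <= Series b.
Proof.
  revert b. induction k as [|k IH]; intros b Hb Hex;
    rewrite Series_incr_1 by exact Hex;
    pose proof (proj1 (ex_series_incr_1 b) Hex) as Hex'.
  - pose proof (Series_nonneg (fun n => b (S n)) (fun n => Hb (S n)) Hex'). lra.
  - pose proof (IH (fun n => b (S n)) (fun n => Hb (S n)) Hex'). pose proof (Hb 0%nat). lra.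
Qed.

Section GeometricWeights.
Variable q : R.
Hypothesis hq : 0 < q < 1.

Lemma ex_series_geom_weighted (a : nat -> R) :
  (forall n, 0 <= a n <= 1) -> ex_series (fun n => q ^ n * a n).
Proof.
  intro Ha.
  apply (@ex_series_le R_AbsRing R_CompleteNormedModule _ (fun n => q ^ n)).
  - intro n. change (norm (q ^ n * a n)) with (Rabs (q ^ n * a n)).
    pose proof (pow_lt q n (proj1 hq)). specialize (Ha n).
    rewrite Rabs_pos_eq by nra. nra.
  - apply ex_series_geom. rewrite Rabs_pos_eq; lra.
Qed.

Lemma geom_weighted_tail (a : nat -> R) (M : nat) : (forall n, 0 <= a n <= 1) ->
  Rabs (Series (fun n => q ^ n * a n) - sum_f_R0 (fun n => q ^ n * a n) M)
    <= q ^ S M / (1 - q).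
Proof.
  intro Ha.
  rewrite (Series_incr_n _ (S M)) by (lia || apply ex_series_geom_weighted; auto).
  simpl pred.
  rewrite (Series_ext _ (fun k => q ^ S M * (q ^ k * a (S M + k)%nat)))
    by (intro k; rewrite pow_add; ring).
  rewrite Series_scal_l.
  set (T := Series (fun k => q ^ k * a (S M + k)%nat)).
  assert (Hgeom : 0 <= T <= / (1 - q)).
  { pose proof (fun n => pow_lt q n (proj1 hq)) as Hpow.
    pose proof (fun n => Ha (S M + n)%nat) as Ha'.
    split.
    - apply Series_nonneg; [intro n; specialize (Hpow n); specialize (Ha' n); nra|].
      apply ex_series_geom_weighted. auto.
    - rewrite <- Series_geom by (rewrite Rabs_pos_eq; lra).
      apply Series_le; [intro n; specialize (Hpow n); specialize (Ha' n); nra|].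
      apply ex_series_geom. rewrite Rabs_pos_eq; lra. }
  pose proof (pow_lt q (S M) (proj1 hq)).
  replace (_ + q ^ S M * T - _) with (q ^ S M * T) by ring.
  rewrite Rabs_pos_eq by nra. unfold Rdiv. apply Rmult_le_compat_l; lra.
Qed.

Variables (X : MetricSpace) (u : X -> R) (h : X -> X).
Hypothesis hu : forall x, 0 <= u x <= 1.

Definition orbit_sum (x : X) : R := Series (fun n => q ^ n * u (Nat.iter n h x)).

Lemma ex_series_orbit (x : X) : ex_series (fun n => q ^ n * u (Nat.iter n h x)).
Proof. apply ex_series_geom_weighted. auto. Qed.

Lemma orbit_sum_unfold (x : X) : orbit_sum x = u x + q * orbit_sum (h x).
Proof.
  unfold orbit_sum. rewrite Series_incr_1 by apply ex_series_orbit.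
  rewrite <- Series_scal_l. simpl. f_equal; [ring|].
  apply Series_ext. intro n. rewrite <- Nat.iter_succ_r. simpl. ring.
Qed.

Lemma orbit_sum_ge_term (x : X) (n : nat) : q ^ n * u (Nat.iter n h x) <= orbit_sum x.
Proof.
  apply (Series_ge_term n (fun m => q ^ m * u (Nat.iter m h x))); [|apply ex_series_orbit].
  intro m. pose proof (pow_lt q m (proj1 hq)). pose proof (hu (Nat.iter m h x)). nra.
Qed.

Lemma orbit_sum_eq0 (x : X) : (forall n, u (Nat.iter n h x) = 0) -> orbit_sum x = 0.
Proof. intro Hx. apply Series_zero. intro n. rewrite Hx. ring. Qed.

Lemma rcontinuous_orbit_sum : rcontinuous X u -> continuous X h -> rcontinuous X orbit_sum.
Proof.
  intros Hu Hh. apply rcontinuous_uniform_limit. intros eps Heps.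
  destruct (pow_lt_1_zero q ltac:(rewrite Rabs_pos_eq; lra) (eps * (1 - q))) as [M HM].
  { apply Rmult_lt_0_compat; lra. }
  specialize (HM (S M) ltac:(lia)). rewrite Rabs_pos_eq in HM by (apply pow_le; lra).
  exists (fun x => sum_f_R0 (fun n => q ^ n * u (Nat.iter n h x)) M). split.
  - apply rcontinuous_sum. intro n.
    apply rcontinuous_scal, rcontinuous_comp, continuous_iter; assumption.
  - intro x. eapply Rle_trans; [apply geom_weighted_tail; auto|].
    apply Rmult_le_reg_r with (1 - q); [lra|].
    unfold Rdiv. rewrite Rmult_assoc, Rinv_l by lra. lra.
Qed.

End GeometricWeights.

Definition mu : R := (3 - sqrt 5) / 2.

Lemma mu_bounds : 0 < mu < 1.
Proof.
  unfold mu. pose proof (sqrt_sqrt 5 ltac:(lra)). pose proof (sqrt_pos 5). nra.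
Qed.

Lemma mu_mul_3_sub : mu * (3 - mu) = 1.
Proof. unfold mu. pose proof (sqrt_sqrt 5 ltac:(lra)). nra. Qed.

Section Catenary.
Variables (X : MetricSpace) (f g : X -> X).
Hypotheses (Hgf : forall x, g (f x) = x) (Hfg : forall x, f (g x) = x).
Variable u : X -> R.
Hypothesis hu : forall x, 0 <= u x <= 1.

(* The two orbit sums both contain the term [u x], hence the subtraction. *)
Definition catenary (x : X) : R := orbit_sum mu X u f x + orbit_sum mu X u g x - u x.

Lemma catenary_equation (x : X) : u (f x) = 0 -> u x = 0 -> u (g x) = 0 ->
  catenary (f x) - 2 * catenary x + catenary (g x) = catenary x.
Proof.
  intros Hfx Hx Hgx. unfold catenary. rewrite Hfx, Hx, Hgx.
  pose proof (orbit_sum_unfold mu mu_bounds X u f hu x) as Ef.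
  pose proof (orbit_sum_unfold mu mu_bounds X u g hu x) as Eg.
  pose proof (orbit_sum_unfold mu mu_bounds X u g hu (f x)) as Egf.
  pose proof (orbit_sum_unfold mu mu_bounds X u f hu (g x)) as Efg.
  rewrite Hgf in Egf. rewrite Hfg in Efg. rewrite Hx in Ef, Eg.
  rewrite Hfx in Egf. rewrite Hgx in Efg.
  pose proof mu_mul_3_sub as Hmu.
  set (P := orbit_sum mu X u f x) in *. set (Q := orbit_sum mu X u g x) in *.
  set (Pf := orbit_sum mu X u f (f x)) in *. set (Qg := orbit_sum mu X u g (g x)) in *.
  assert (HPf : Pf = (3 - mu) * P) by (rewrite Ef, <- (Rmult_1_l Pf) at 1; rewrite <- Hmu; ring).
  assert (HQg : Qg = (3 - mu) * Q) by (rewrite Eg, <- (Rmult_1_l Qg) at 1; rewrite <- Hmu; ring).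
  rewrite Egf, Efg, HPf, HQg. ring.
Qed.

Lemma catenary_eq0 (x : X) :
  (forall n, u (Nat.iter n f x) = 0) -> (forall n, u (Nat.iter n g x) = 0) -> catenary x = 0.
Proof.
  intros Hf Hg. unfold catenary.
  rewrite (orbit_sum_eq0 mu X u f x Hf), (orbit_sum_eq0 mu X u g x Hg).
  specialize (Hf 0%nat). simpl in Hf. rewrite Hf. ring.
Qed.

Lemma catenary_pos (x : X) : u x = 0 ->
  (exists n, 0 < u (Nat.iter n f x) \/ 0 < u (Nat.iter n g x)) -> 0 < catenary x.
Proof.
  intros Hx [n Hn]. unfold catenary. rewrite Hx.
  pose proof (pow_lt mu n (proj1 mu_bounds)).
  pose proof (orbit_sum_ge_term mu mu_bounds X u f hu x n).
  pose proof (orbit_sum_ge_term mu mu_bounds X u g hu x n).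
  pose proof (orbit_sum_ge_term mu mu_bounds X u f hu x 0). pose proof (hu x).
  pose proof (orbit_sum_ge_term mu mu_bounds X u g hu x 0).
  simpl in *. destruct Hn; nra.
Qed.

Lemma rcontinuous_catenary :
  continuous X f -> continuous X g -> rcontinuous X u -> rcontinuous X catenary.
Proof.
  intros Hf Hg Hu. unfold catenary.
  apply rcontinuous_plus; [apply rcontinuous_plus|apply rcontinuous_opp; exact Hu];
    apply rcontinuous_orbit_sum; auto using mu_bounds.
Qed.

End Catenary.

Lemma invariant_iter (X : MetricSpace) (f g : X -> X) (Lam : X -> Prop) :
  invariant X f Lam -> (forall x, g (f x) = x) ->
  forall x n, Lam x -> Lam (Nat.iter n f x) /\ Lam (Nat.iter n g x).
Proof.
  intros [Hfwd Hbwd] Hgf x n Hx.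
  assert (Hg : forall y, Lam y -> Lam (g y)).
  { intros y Hy. destruct (Hbwd y Hy) as [z [Hz <-]]. rewrite Hgf. exact Hz. }
  induction n as [|n [IHf IHg]]; simpl; auto.
Qed.

Lemma isolating_exit (X : MetricSpace) (f g : X -> X) (Lam N : X -> Prop) (x : X) :
  isolating_neighborhood X f g Lam N -> ~ Lam x ->
  exists n, ~ N (Nat.iter n f x) \/ ~ N (Nat.iter n g x).
Proof.
  intros (_ & _ & Hiso) Hx.
  destruct (not_all_ex_not _ _ (fun H => Hx (Hiso x H))) as [[|p|p] Hn].
  - exists 0%nat. left. exact Hn.
  - exists (Pos.to_nat p). left. exact Hn.
  - exists (Pos.to_nat p). right. exact Hn.
Qed.

Theorem mainTheorem15 (X : MetricSpace) (f g : X -> X)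
  (hf : homeomorphism X f g) (Lam : X -> Prop)
  (hLam : isolated X f g Lam) :
  exists (N : X -> Prop) (L : X -> R), catenary_function X f g Lam N L.
Proof.
  destruct hf as (Hf & Hg & Hgf & Hfg).
  destruct hLam as (HinvLam & N & HN).
  pose proof HN as (Hcomp & (U & _ & HLU & HUN) & _).
  assert (HLN : forall x, Lam x -> N x) by auto.
  pose proof (trunc_dist_bounds X N) as hu.
  exists N, (catenary X f g (trunc_dist X N)).
  split; [exact HN|]. split; [|split; [|split]].
  - apply rcontinuous_continuous_on, rcontinuous_catenary;
      auto using rcontinuous_trunc_dist.
  - intros x Hx. apply catenary_eq0; intro n; apply trunc_dist_eq0, HLN;
      apply (invariant_iter X f g Lam HinvLam Hgf x n Hx).
  - intros x Hx HnLam. apply catenary_pos; [exact hu|apply trunc_dist_eq0, Hx|].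
    destruct (isolating_exit X f g Lam N x HN HnLam) as [n Hn].
    exists n. destruct Hn; [left|right]; apply trunc_dist_pos; eauto.
  - intros x Hfx Hx Hgx. apply catenary_equation; auto using trunc_dist_eq0.
Qed.
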